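(* Let $N$ be a finite set of bidders with nonnegative bids, and for $T\subseteq N$ let $R(T)$ be the second-highest bid in $T$ ($0$ if $|T|\le 1$). Let $\mathbf{A}$ be the $n\times n$ matrix ($n=|N|$) with first column $0$, second column $(\tfrac12,\tfrac12,0,\dots,0)^T$, and, for $3\le j\le n$, $j$-th column with entries $-\frac{1}{j(j-1)}$ in rows $1,\dots,j-1$, $\frac1j$ in row $j$, and $0$ below. Let $\mathbf{b}$ be the vector of bids of $N$ sorted in decreasing order, and let the attribution of the bidder in sorted position $k$ be $(\mathbf{A}\mathbf{b})_k$. Then for each bidder $i\in N$ (with ties among equal bids broken arbitrarily in the sorting), its attribution equals its Shapley value in the cooperative game $(N,R)$: $$\sum_{T\subseteq N\setminus\{i\}} \frac{|T|!\,(|N|-|T|-1)!}{|N|!}\bigl(R(T\cup\{i\})-R(T)\bigr).$$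
   Context: The attribution $\mathbf{A}\mathbf{b}$ is the linear revenue attribution used by the paper's ''Shapley's linear heuristic'' for second-price auctions; $R$ is viewed as a characteristic function on subsets of bidders. *)

From HB Require Import structures.
From mathcomp Require Import all_boot all_order all_algebra all_fingroup.
Set Implicit Arguments. Unset Strict Implicit. Unset Printing Implicit Defensive.
Import Order.TTheory GRing.Theory Num.Theory.
Local Open Scope ring_scope.

(* R(T): second-highest bid in T, i.e. the element at index 1 (0-based) of the
   bids of T sorted in decreasing order; 0 if |T| <= 1. *)
Definition secondHighest (R : realFieldType) (n : nat) (b : 'I_n -> R)
  (T : {set 'I_n}) : R :=
  nth 0 (sort (fun x y : R => y <= x) [seq b j | j <- enum T]) 1.

(* The matrix A, 0-based indices: column 0 is zero; column 1 is (1/2,1/2,0,..);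
   column j >= 2 (paper's j+1 >= 3) has -1/((j+1) j) in rows < j, 1/(j+1) in row j,
   0 below. *)
Definition attrMatrix (R : realFieldType) (n : nat) : 'M[R]_n :=
  \matrix_(i < n, j < n)
    if (j == 0%N :> nat) then 0
    else if (j == 1%N :> nat) then (if (i <= 1)%N then 2%:R^-1 else 0)
    else if (i < j)%N then - ((j.+1 * j)%N%:R)^-1
    else if (i == j :> nat) then (j.+1)%:R^-1
    else 0.

Definition shapley (R : realFieldType) (n : nat) (v : {set 'I_n} -> R)
  (i : 'I_n) : R :=
  \sum_(T : {set 'I_n} | T \subset ~: [set i])
     ((#|T| `! * (n - #|T| - 1) `!)%N%:R / (n `!)%:R) * (v (i |: T) - v T).

From mathcomp Require Import all_boot all_order all_algebra all_fingroup.
From mathcomp Require Import ring lra zify.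

Set Implicit Arguments.
Unset Strict Implicit.
Unset Printing Implicit Defensive.
Import Order.TTheory GRing.Theory Num.Theory.
Local Open Scope ring_scope.

(* Let [s] list the bidders by decreasing bid and let [U_k T] say that [T]
   contains at least two of the [k + 1] highest bidders.  Then
   [R T = \sum_k b (s k) * (U_k T - U_(k-1) T)].  In [U_k] the top [k + 1]
   bidders are symmetric and all others are dummies, so by efficiency each top
   bidder gets [1 / (k + 1)] (nothing when [k = 0]); column [k] of [A] is the
   difference of these values for [U_k] and [U_(k-1)], and linearity of the
   Shapley value concludes. *)

Lemma big_setU1_notin (R : nmodType) (T : finType) (i : T)
    (F : {set T} -> nat -> R) :
  \sum_(A : {set T} | i \notin A) F (i |: A) #|A| =
  \sum_(A : {set T} | i \in A) F A #|A|.-1.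
Proof.
symmetry; rewrite (reindex_onto (fun A => i |: A) (fun A => A :\ i)) /=.
  apply: eq_big => [A|A /andP[_ /eqP A_eq]].
    rewrite setU11 /=; apply/eqP/idP => [<-|iNA]; first by rewrite setD11.
    by rewrite setU1K.
  have iNA : i \notin A by rewrite -A_eq setD11.
  by rewrite cardsU1 iNA.
by move=> A iA; rewrite setD1K.
Qed.

Lemma exchange_big_card (R : nmodType) (I J : finType) (P : I -> J -> bool)
    (F : J -> R) :
  \sum_(i : I) \sum_(j | P i j) F j = \sum_(j : J) F j *+ #|[set i | P i j]|.
Proof.
rewrite (exchange_big_dep xpredT) //=; apply: eq_bigr => j _.
by rewrite -sumr_const; apply: eq_bigl => i; rewrite inE.
Qed.

Lemma card_ord_le (n k : nat) : (k < n)%N -> #|[set l : 'I_n | (l <= k)%N]| = k.+1.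
Proof.
move=> k_lt_n; have -> : [set l : 'I_n | (l <= k)%N] = widen_ord k_lt_n @: 'I_k.+1.
  apply/setP => l; rewrite !inE; apply/idP/imsetP => [l_le_k|[m _ ->]] /=.
    by exists (Ordinal (l_le_k : (l < k.+1)%N)) => //; apply: val_inj.
  by rewrite -ltnS.
by rewrite card_imset ?card_ord // => l m /(congr1 val) /= /val_inj.
Qed.

Lemma sorted_ltn_count_leq (r : seq nat) k : sorted ltn r ->
  (1 < count (leq^~ k) r)%N = (1 < size r)%N && (nth 0 r 1 <= k)%N.
Proof.
case: r => [|a [|c r]] //=; first by case: (a <= k)%N.
move=> /andP[a_lt_c c_path].
have c_lt : all (ltn c) r by apply: order_path_min c_path; exact: ltn_trans.
have [c_le_k|k_lt_c] := leqP c k; first by rewrite (leq_trans (ltnW a_lt_c) c_le_k).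
suff -> : count (leq^~ k) r = 0%N by case: (a <= k)%N.
apply/eqP; rewrite -leqn0 leqNgt -has_count; apply/hasPn => x /(allP c_lt).
by move=> c_lt_x; rewrite -ltnNge (ltn_trans k_lt_c c_lt_x).
Qed.

Section ShapleyValue.
Variables (R : realFieldType) (n : nat).
Implicit Types (v u : {set 'I_n} -> R) (i : 'I_n).

Definition shapleyWeight (t : nat) : R := (t`! * (n - t - 1)`!)%N%:R / (n`!)%:R.

Lemma shapleyE v i :
  shapley v i = \sum_(T : {set 'I_n} | i \notin T) shapleyWeight #|T| * (v (i |: T) - v T).
Proof. by apply: eq_bigl => T; rewrite subsetC sub1set in_setC. Qed.

Lemma eq_shapley v u : v =1 u -> shapley v =1 shapley u.
Proof. by move=> vu i; apply: eq_bigr => T _; rewrite !vu. Qed.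

Lemma shapleyB v u i :
  shapley (fun T => v T - u T) i = shapley v i - shapley u i.
Proof.
rewrite /shapley -sumrB; apply: eq_bigr => T _.
by rewrite -mulrBr; congr (_ * _); ring.
Qed.

Lemma shapley_sum (I : finType) (a : I -> R) (v : I -> {set 'I_n} -> R) i :
  shapley (fun T => \sum_k a k * v k T) i = \sum_k a k * shapley (v k) i.
Proof.
rewrite /shapley; under eq_bigr => T _ do rewrite -sumrB mulr_sumr.
rewrite exchange_big /=; apply: eq_bigr => k _; rewrite mulr_sumr.
by apply: eq_bigr => T _; rewrite -mulrBr mulrCA.
Qed.

Lemma shapley_dummy v i : (forall T, v (i |: T) = v T) -> shapley v i = 0.
Proof. by move=> vi; rewrite /shapley big1 // => T _; rewrite vi subrr mulr0. Qed.

Lemma shapley_perm v (p : {perm 'I_n}) i :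
  (forall T : {set 'I_n}, v (p @: T) = v T) -> shapley v (p i) = shapley v i.
Proof.
move=> vp; have p_inj : injective p := @perm_inj _ p.
rewrite !shapleyE (reindex_inj (imset_inj p_inj)) /=.
apply: eq_big => [T|T _]; first by rewrite mem_imset.
by rewrite card_imset // -imsetU1 !vp.
Qed.

(* Both products equal [t`! (n - t)`! / n`!] except at the ends [t = 0] and
   [t = n], so the efficiency sum telescopes to [v setT - v set0]. *)
Lemma shapleyWeight_telescope t : (0 < n)%N -> (t <= n)%N ->
  t%:R * shapleyWeight t.-1 - (n - t)%:R * shapleyWeight t =
  (t == n)%:R - (t == 0)%:R.
Proof.
move=> n_gt0 t_le_n; rewrite /shapleyWeight !mulrA -!natrM.
have fact_neq0 : (n`!)%:R != 0 :> R by rewrite pnatr_eq0 -lt0n fact_gt0.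
have fact_pred m : (0 < m)%N -> (m * m.-1`!)%N = m`! by case: m => // m; rewrite factS.
case: (posnP t) => [->|t_gt0].
  rewrite eq_sym (gtn_eqF n_gt0) subn0 mul0n mul0r sub0r fact0 mul1n subn1.
  by rewrite fact_pred // mulfV // sub0r.
case: (ltngtP t n) t_le_n => // [t_lt_n _|-> _]; last first.
  rewrite subnn !mul0n mul0r subr0 mulnA fact_pred //.
  by rewrite -subnDA addn1 prednK // subnn muln1 mulfV // subr0.
rewrite subrr; apply/eqP; rewrite subr_eq0.
rewrite mulnA fact_pred // -subnDA addn1 prednK //.
by rewrite mulnCA subn1 fact_pred ?subn_gt0.
Qed.

Lemma shapley_efficient v :
  (0 < n)%N -> \sum_i shapley v i = v setT - v set0.
Proof.
move=> n_gt0.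
have shapley_split i : shapley v i =
    \sum_(S : {set 'I_n} | i \in S) shapleyWeight #|S|.-1 * v S -
    \sum_(S : {set 'I_n} | i \notin S) shapleyWeight #|S| * v S.
  rewrite shapleyE (eq_bigr _ (fun T _ => mulrBr _ _ _)) sumrB.
  by rewrite (big_setU1_notin i (fun S t => shapleyWeight t * v S)).
rewrite (eq_bigr _ (fun i _ => shapley_split i)) sumrB !exchange_big_card -sumrB.
have card_in (S : {set 'I_n}) : #|[set i | i \in S]| = #|S| by apply: eq_card => i; rewrite inE.
have card_notin (S : {set 'I_n}) : #|[set i | i \notin S]| = (n - #|S|)%N.
  have := cardsC S; rewrite card_ord -[~: S]/[set i | i \notin S]; lia.
have cardS_le (S : {set 'I_n}) : (#|S| <= n)%N by have := max_card (mem S); rewrite card_ord.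
have cardS_eqn (S : {set 'I_n}) : (#|S| == n) = (S == setT).
  by rewrite [S == _]eqEcard subsetT cardsT card_ord eqn_leq cardS_le.
have coef (S : {set 'I_n}) : shapleyWeight #|S|.-1 * v S *+ #|[set i | i \in S]| -
    shapleyWeight #|S| * v S *+ #|[set i | i \notin S]| =
    (if S == setT then v S else 0) - (if S == set0 then v S else 0).
  rewrite card_in card_notin -[_ * v S *+ #|S|]mulr_natl.
  rewrite -[_ * v S *+ (n - _)]mulr_natl mulrA [(n - _)%:R * _]mulrA -mulrBl.
  by rewrite shapleyWeight_telescope // cardS_eqn cards_eq0 mulrBl !mulr_natl !mulrb.
by rewrite (eq_bigr _ (fun S _ => coef S)) sumrB -!big_mkcond !big_pred1_eq.
Qed.

End ShapleyValue.

Definition pairShare (R : realFieldType) (p k : nat) : R :=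
  if (0 < k)%N && (p <= k)%N then k.+1%:R^-1 else 0.

Lemma attrMatrixE (R : realFieldType) (n : nat) (p j : 'I_n) :
  attrMatrix R n p j =
  pairShare R p j - (if j : nat is j'.+1 then pairShare R p j' else 0).
Proof.
rewrite mxE /pairShare; case: (nat_of_ord j) => [|[|k]] /=.
- by rewrite subr0.
- by case: (p <= 1)%N; rewrite subr0.
case: (ltngtP p k.+2) => [p_lt|p_gt|p_eq].
- rewrite -ltnS p_lt natrM.
  have k_ge0 : 0 <= k%:R :> R := ler0n _ _.
  by field; apply/andP; split; apply/eqP; lra.
- by rewrite leqNgt (ltn_trans (ltnSn _) p_gt) subr0.
- by rewrite p_eq leqNgt ltnSn subr0.
Qed.



Section SecondPriceGame.
Variables (R : realFieldType) (n : nat) (s : 'S_n).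
Implicit Types (T : {set 'I_n}) (i : 'I_n) (k : nat).

Definition topSet k : {set 'I_n} := [set j | ((s^-1)%g j <= k)%N].

Definition pairGame k T : R := (1 < #|T :&: topSet k|)%N%:R.

(* Equal to 1 exactly when the second-highest bidder of [T] sits at sorted
   position [k]. *)
Definition secondRankGame k T : R :=
  pairGame k T - (if k is k'.+1 then pairGame k' T else 0).

Lemma card_topSet k : (k < n)%N -> #|topSet k| = k.+1.
Proof.
move=> k_lt_n; rewrite -(card_ord_le k_lt_n) -(card_preimset _ (@perm_inj _ s)).
by apply: eq_card => j; rewrite !inE permK.
Qed.

Lemma pairGame_dummy k i T : i \notin topSet k -> pairGame k (i |: T) = pairGame k T.
Proof.
rewrite inE => /negbTE iNtop; congr (_%:R); congr (1 < _)%N.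
by apply: eq_card => j; rewrite !inE; case: eqP => [->|//]; rewrite iNtop !andbF.
Qed.

Lemma pairGame_perm k (p : {perm 'I_n}) T :
  p @: topSet k = topSet k -> pairGame k (p @: T) = pairGame k T.
Proof.
move=> p_top; rewrite /pairGame -{1}p_top -imsetI; last by move=> ? ? _ _; apply: perm_inj.
by rewrite card_imset //; apply: perm_inj.
Qed.

Lemma shapley_pairGame k i : (k < n)%N ->
  shapley (pairGame k) i = pairShare R ((s^-1)%g i) k.
Proof.
move=> k_lt_n; rewrite /pairShare.
have [i_le_k|i_gt_k] := boolP ((s^-1)%g i <= k)%N; last first.
  by rewrite andbF; apply: shapley_dummy => T; apply: pairGame_dummy; rewrite inE.
have i_top : i \in topSet k by rewrite inE.
rewrite andbT.
case: k {i_le_k} k_lt_n i_top => [|k] k_lt_n i_top /=.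
  apply: shapley_dummy => T; rewrite /pairGame.
  suff small U : (#|U :&: topSet 0| <= 1)%N by rewrite !ltnNge !small.
  by rewrite -(card_topSet k_lt_n) subset_leq_card ?subsetIr.
have sym j : j \in topSet k.+1 -> shapley (pairGame k.+1) j = shapley (pairGame k.+1) i.
  move=> j_top; rewrite -{1}(tpermL i j); apply: shapley_perm => T.
  apply: pairGame_perm; apply/eqP; rewrite eqEcard card_imset ?leqnn ?andbT; last first.
    exact: perm_inj.
  by apply/subsetP => _ /imsetP[l l_top ->]; case: tpermP.
have := shapley_efficient (pairGame k.+1) (leq_ltn_trans (leq0n _) k_lt_n).
rewrite (bigID (mem (topSet k.+1))) /= (eq_bigr _ sym) [X in _ + X]big1; last first.
  by move=> j jNtop; apply: shapley_dummy => T; exact: pairGame_dummy.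
rewrite addr0 sumr_const card_topSet // /pairGame setTI card_topSet // set0I cards0.
rewrite subr0 => eff; apply: (@mulfI _ k.+2%:R); first by rewrite pnatr_eq0.
by rewrite mulfV ?pnatr_eq0 // mulr_natl eff.
Qed.

Lemma shapley_secondRankGame k i : (k < n)%N ->
  shapley (secondRankGame k) i =
  pairShare R ((s^-1)%g i) k -
  (if k is k'.+1 then pairShare R ((s^-1)%g i) k' else 0).
Proof.
case: k => [|k] k_lt_n; rewrite /secondRankGame.
  rewrite (eq_shapley (u := pairGame 0)) ?shapley_pairGame ?subr0 // => T.
  by rewrite subr0.
by rewrite shapleyB !shapley_pairGame // ltnW.
Qed.

Definition positions T : seq 'I_n := [seq k <- enum 'I_n | s k \in T].

Lemma sorted_positions T : sorted ltn (map val (positions T)).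
Proof.
rewrite sorted_map; apply: sorted_filter; first exact: ltn_trans.
by rewrite -sorted_map val_enum_ord iota_ltn_sorted.
Qed.

Lemma card_topSetI T k :
  #|T :&: topSet k| = count (leq^~ k) (map val (positions T)).
Proof.
rewrite count_map -(card_preimset _ (@perm_inj _ s)) cardE /enum_mem size_filter.
rewrite /positions enumT count_filter; apply: eq_count => j.
by rewrite !inE permK andbC.
Qed.

Lemma sort_bids (b : 'I_n -> R) T :
  (forall k l : 'I_n, (k <= l)%N -> b (s l) <= b (s k)) ->
  sort (fun x y : R => y <= x) [seq b j | j <- enum T] =
  [seq b (s p) | p <- positions T].
Proof.
move=> b_sorted; apply: (@sorted_eq _ (fun x y : R => y <= x)).
- by move=> y x z xy yz; apply: le_trans yz xy.
- by move=> x y /andP[xy yx]; apply/eqP; rewrite eq_le xy yx.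
- by apply: sort_sorted => x y; apply: le_total.
- have := sorted_positions T; rewrite sorted_map.
  apply: homo_sorted => k l /ltnW; exact: b_sorted.
rewrite perm_sort perm_sym (map_comp b s) perm_map //.
have s_inj : injective s := @perm_inj _ s.
apply: uniq_perm; first by rewrite (map_inj_uniq s_inj) filter_uniq ?enum_uniq.
  exact: enum_uniq.
by move=> j; rewrite -{1}(permKV s j) (mem_map s_inj) mem_filter !mem_enum permKV andbT.
Qed.

Lemma secondHighest_decomp (b : 'I_n -> R) T :
  (forall k l : 'I_n, (k <= l)%N -> b (s l) <= b (s k)) ->
  secondHighest b T = \sum_(k < n) b (s k) * secondRankGame k T.
Proof.
move=> b_sorted; rewrite /secondHighest sort_bids //.
pose c := nth 0 (map val (positions T)) 1.
have pairGameE k : pairGame k T = ((1 < size (positions T))%N && (c <= k)%N)%:R.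
  by rewrite /pairGame card_topSetI sorted_ltn_count_leq ?sorted_positions ?size_map.
have rankE k : secondRankGame k T = ((1 < size (positions T))%N && (k == c))%:R.
  rewrite /secondRankGame; case: k => [|k]; rewrite !pairGameE; case: (1 < _)%N => /=.
  - by rewrite leqn0 eq_sym subr0.
  - by rewrite subr0.
  - have [c_lt|c_gt|->] := ltngtP c k.+1; last by rewrite ltnn subr0.
      by rewrite -ltnS c_lt subrr.
    by rewrite leqNgt (ltn_trans (ltnSn k) c_gt) subrr.
  - by rewrite subrr.
move: rankE => {pairGameE}; rewrite {}/c; case: (positions T) => [|a [|c r]] /= rankE.
- by rewrite big1 // => k _; rewrite rankE mulr0.
- by rewrite big1 // => k _; rewrite rankE mulr0.
rewrite (bigD1 c) //= rankE eqxx mulr1 big1 ?addr0 // => k k_neq_c.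
by rewrite rankE val_eqE (negbTE k_neq_c) mulr0.
Qed.

End SecondPriceGame.

Theorem attrMatrix_shapley (R : realFieldType) (n : nat) (b : 'I_n -> R)
    (sigma : 'S_n) :
  (forall k l : 'I_n, (k <= l)%N -> b (sigma l) <= b (sigma k)) ->
  forall i : 'I_n,
    (attrMatrix R n *m (\col_k b (sigma k))) ((sigma^-1)%g i) 0 =
    shapley (secondHighest b) i.
Proof.
move=> b_sorted i; rewrite mxE.
rewrite (eq_shapley (fun T => secondHighest_decomp T b_sorted)) shapley_sum.
by apply: eq_bigr => k _; rewrite attrMatrixE mxE shapley_secondRankGame // mulrC.
Qed.

(* The identity holds for bids of any sign. *)
Theorem mainTheorem4 (R : realFieldType) (n : nat) (b : 'I_n -> R)
  (b_nonneg : forall i, 0 <= b i)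
  (sigma : 'S_n)
  (sorted_sigma : forall k l : 'I_n, (k <= l)%N -> b (sigma l) <= b (sigma k)) :
  forall i : 'I_n,
    (attrMatrix R n *m (\col_k b (sigma k))) ((sigma^-1)%g i) 0
    = shapley (secondHighest b) i.
Proof. exact: attrMatrix_shapley sorted_sigma. Qed.
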